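(* For every pair of integers $r,k\geq2$ with $(r,k)\neq(2,2)$, $$\frac{k\,p_{r,k}(k)\cdot\alpha}{r\beta}=\frac{1}{(r-1)(k-1)}.$$
   Context: $f_t(\mu)=e^{-\mu}\sum_{i\geq t}\mu^i/i!$. $\mu_{r,k}$ is the unique minimizer over $\mu>0$ of $\mu/f_{k-1}(\mu)^{r-1}$. $\alpha=f_k(\mu_{r,k})$, $\beta=\frac1r\mu_{r,k}f_{k-1}(\mu_{r,k})$, and $p_{r,k}(k)=e^{-\mu_{r,k}}\frac{\mu_{r,k}^k}{f_k(\mu_{r,k})\,k!}$. *)

From Stdlib Require Import Reals Lra Lia.
From Coquelicot Require Import Coquelicot.
Open Scope R_scope.

Definition ftail (t : nat) (mu : R) : R :=
  exp (- mu) * Series (fun i : nat => if (t <=? i)%nat then mu ^ i / INR (Factorial.fact i) else 0).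

Definition obj (r k : nat) (mu : R) : R := mu / (ftail (k - 1) mu) ^ (r - 1).

(* mu is a minimizer over mu > 0 of the objective (mu_{r,k} is the unique one) *)
Definition is_mu_rk (r k : nat) (mu : R) : Prop :=
  0 < mu /\ forall x : R, 0 < x -> obj r k mu <= obj r k x.

Definition alpha_rk (k : nat) (mu : R) : R := ftail k mu.
Definition beta_rk (r k : nat) (mu : R) : R := / INR r * mu * ftail (k - 1) mu.
Definition p_rk_k (k : nat) (mu : R) : R :=
  exp (- mu) * mu ^ k / (ftail k mu * INR (Factorial.fact k)).

(** Write [G = f_{k-1}]. Since [f_{k-1}(mu) = 1 - e^{-mu} sum_{i<k-1} mu^i/i!],
    the partial sums telescope under differentiation and [G'(mu) = e^{-mu} mu^{k-2}/(k-2)!].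
    At the interior minimum of [mu / G(mu)^{r-1}] the derivative vanishes, i.e.
    [G(mu) = (r-1) mu G'(mu) = (r-1) e^{-mu} mu^{k-1}/(k-2)!].  Substituting this into
    [k p_{r,k}(k) alpha / (r beta) = e^{-mu} mu^{k-1} / ((k-1)! G(mu))] leaves
    [(k-2)! / ((k-1)! (r-1))]. *)

From Stdlib Require Import Reals Lra Lia.
From Coquelicot Require Import Coquelicot.
Open Scope R_scope.

Definition exp_term (x : R) (n : nat) : R := x ^ n / INR (Factorial.fact n).

Definition exp_tail_term (t : nat) (x : R) (n : nat) : R :=
  if (t <=? n)%nat then exp_term x n else 0.

Lemma fact_INR_neq0 n : INR (Factorial.fact n) <> 0.
Proof. apply not_0_INR, Factorial.fact_neq_0. Qed.

Lemma exp_term_pos x n : 0 < x -> 0 < exp_term x n.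
Proof.
  intro Hx. apply Rdiv_lt_0_compat; [now apply pow_lt|].
  apply lt_0_INR, Factorial.lt_O_fact.
Qed.

Lemma exp_term_succ x n : exp_term x (S n) = x / INR (S n) * exp_term x n.
Proof.
  unfold exp_term. rewrite fact_simpl, mult_INR. simpl pow.
  field. split; [apply fact_INR_neq0 | apply not_0_INR; lia].
Qed.

Lemma is_series_exp_term x : is_series (exp_term x) (exp x).
Proof.
  generalize (is_exp_Reals x). unfold is_pseries. apply is_series_ext.
  intro n. rewrite pow_n_pow. reflexivity.
Qed.

Lemma is_series_exp_tail_term m x :
  is_series (exp_tail_term (S m) x) (exp x - sum_n (exp_term x) m).
Proof.
  assert (Hhead : forall n, (n < S m)%nat -> exp_tail_term (S m) x n = 0).
  { intros n Hn. unfold exp_tail_term. destruct (Nat.leb_spec (S m) n); [lia | easy]. }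
  apply (is_series_decr_n _ (S m)); [lia|]. simpl pred.
  rewrite (sum_n_ext_loc (exp_tail_term (S m) x) (fun _ => 0))
    by (intros n Hn; apply Hhead; lia).
  rewrite sum_n_const.
  apply (is_series_ext (fun n => exp_term x (S m + n))).
  { intro n. unfold exp_tail_term. destruct (Nat.leb_spec (S m) (S m + n)); [easy | lia]. }
  apply (is_series_incr_n (exp_term x) (S m)); [lia|].
  match goal with |- is_series _ ?l => replace l with (exp x) end.
  - apply is_series_exp_term.
  - (* [is_series_incr_n] produced the sum in a different canonical structure. *)
    change (@sum_n (NormedModule.AbelianMonoid R_AbsRing R_NormedModule))
      with (@sum_n R_AbelianMonoid).
    unfold plus, opp; simpl. ring.
Qed.

Lemma ftail_succ m x : ftail (S m) x = 1 - exp (- x) * sum_n (exp_term x) m.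
Proof.
  unfold ftail. change (fun i : nat => _) with (exp_tail_term (S m) x).
  rewrite (is_series_unique _ _ (is_series_exp_tail_term m x)).
  rewrite Rmult_minus_distr_l, <- exp_plus, Rplus_opp_l, exp_0. reflexivity.
Qed.

Lemma Series_nonneg (a : nat -> R) :
  (forall n, 0 <= a n) -> ex_series a -> 0 <= Series a.
Proof.
  intros Ha Hex.
  replace 0 with (Series (fun n => 0 * a n)) by (rewrite Series_scal_l; ring).
  apply Series_le; [intro n; rewrite Rmult_0_l; split; [lra | apply Ha] | exact Hex].
Qed.

Lemma exp_gt_partial_sum m x : 0 < x -> sum_n (exp_term x) m < exp x.
Proof.
  intro Hx.
  assert (Hrest : 0 <= exp x - sum_n (exp_term x) (S m)).
  { rewrite <- (is_series_unique _ _ (is_series_exp_tail_term (S m) x)).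
    apply Series_nonneg; [|eexists; apply is_series_exp_tail_term].
    intro n. unfold exp_tail_term. destruct (_ <=? _)%nat; [|lra].
    now apply Rlt_le, exp_term_pos. }
  rewrite sum_Sn in Hrest. unfold plus in Hrest; simpl in Hrest.
  pose proof (exp_term_pos x (S m) Hx). lra.
Qed.

Lemma ftail_succ_pos m x : 0 < x -> 0 < ftail (S m) x.
Proof.
  intro Hx. rewrite ftail_succ.
  assert (Hinv : exp (- x) * exp x = 1) by (rewrite <- exp_plus, Rplus_opp_l; apply exp_0).
  pose proof (exp_gt_partial_sum m x Hx). pose proof (exp_pos (- x)). nra.
Qed.

Lemma is_derive_exp_term_damped m x :
  is_derive (fun y => exp (- y) * exp_term y (S m)) x
    (exp (- x) * (exp_term x m - exp_term x (S m))).
Proof.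
  unfold exp_term. pose proof (fact_INR_neq0 m).
  pose proof (not_0_INR (S m) ltac:(lia)).
  auto_derive; [easy|].
  change (match m with 0%nat => 1 | S _ => INR m + 1 end) with (INR (S m)).
  change (Factorial.fact m + m * Factorial.fact m)%nat with (Factorial.fact (S m)).
  rewrite fact_simpl, mult_INR. simpl pow. field. auto.
Qed.

(** The damped partial sums telescope: only the top term survives. *)
Lemma is_derive_exp_partial_sum_damped m x :
  is_derive (fun y => exp (- y) * sum_n (exp_term y) m) x (- exp (- x) * exp_term x m).
Proof.
  induction m as [|m IH].
  - apply (is_derive_ext (fun y => exp (- y))).
    { intro y. rewrite sum_O. unfold exp_term. simpl. field. }
    auto_derive; [easy|]. unfold exp_term. simpl. field.
  - pose proof (is_derive_plus _ _ _ _ _ IH (is_derive_exp_term_damped m x)) as Hsum.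
    replace (- exp (- x) * exp_term x (S m))
      with (plus (- exp (- x) * exp_term x m) (exp (- x) * (exp_term x m - exp_term x (S m))))
      by (unfold plus; simpl; ring).
    refine (is_derive_ext _ _ _ _ _ Hsum).
    intro y. rewrite sum_Sn. unfold plus; simpl. ring.
Qed.

Lemma is_derive_ftail_succ m x : is_derive (ftail (S m)) x (exp (- x) * exp_term x m).
Proof.
  pose proof (is_derive_minus _ _ _ _ _
    (is_derive_const 1 x) (is_derive_exp_partial_sum_damped m x)) as Hdiff.
  replace (exp (- x) * exp_term x m) with (minus 0 (- exp (- x) * exp_term x m))
    by (unfold minus, plus, opp; simpl; ring).
  refine (is_derive_ext _ _ _ _ _ Hdiff).
  intro y. now rewrite ftail_succ.
Qed.

Lemma is_derive_interior_min_eq0 (f : R -> R) a b c l :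
  is_derive f c l -> a < c < b -> (forall x, a < x < b -> f c <= f x) -> l = 0.
Proof.
  intros Hd [Hac Hcb] Hmin. apply is_derive_Reals in Hd.
  rewrite <- (derive_pt_eq_0 _ _ _ (exist _ l Hd) Hd).
  apply (deriv_minimum f a b c); auto.
Qed.

Lemma min_div_pow_stationary (G : R -> R) n mu D :
  0 < mu -> 0 < G mu -> is_derive G mu D ->
  (forall x, 0 < x -> mu / G mu ^ S n <= x / G x ^ S n) ->
  G mu = INR (S n) * mu * D.
Proof.
  intros Hmu HG HD Hmin.
  assert (Hpow : G mu ^ S n <> 0) by (apply pow_nonzero; lra).
  assert (Hpow' : G mu ^ n <> 0) by (apply pow_nonzero; lra).
  pose proof (is_derive_div (fun y => y) (fun y => G y ^ S n) mu _ _
    (is_derive_id mu) (is_derive_pow G (S n) mu D HD) Hpow) as Hquot.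
  pose proof (is_derive_interior_min_eq0 _ 0 (mu + 1) mu _ Hquot
    ltac:(lra) ltac:(intros x Hx; apply Hmin; lra)) as Hzero.
  cbv beta in Hzero. simpl Init.Nat.pred in Hzero.
  unfold Rdiv in Hzero. apply Rmult_integral in Hzero as [Hnum | Hinv].
  - assert (Hfactor : G mu ^ n * (G mu - INR (S n) * mu * D) = 0).
    { rewrite <- Hnum. unfold one; simpl. ring. }
    apply Rmult_integral in Hfactor as [|]; [contradiction | lra].
  - exfalso. revert Hinv. apply Rinv_neq_0_compat, pow_nonzero, Hpow.
Qed.

Lemma p_rk_k_exp_term k mu : p_rk_k k mu = exp (- mu) * exp_term mu k / ftail k mu.
Proof. unfold p_rk_k, exp_term, Rdiv. rewrite Rinv_mult. ring. Qed.

Theorem lemma40 (r k : nat) (hr : (2 <= r)%nat) (hk : (2 <= k)%nat)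
  (hrk : ~ (r = 2%nat /\ k = 2%nat)) (mu : R) (hmu : is_mu_rk r k mu) :
  INR k * p_rk_k k mu * alpha_rk k mu / (INR r * beta_rk r k mu)
  = 1 / ((INR r - 1) * (INR k - 1)).
Proof.
  destruct r as [|[|r]]; [lia | lia|]. destruct k as [|[|k]]; [lia | lia|].
  destruct hmu as [Hmu Hmin]. unfold obj in Hmin. simpl Nat.sub in Hmin.
  pose proof (ftail_succ_pos k mu Hmu) as HG.
  pose proof (ftail_succ_pos (S k) mu Hmu) as Halpha.
  pose proof (min_div_pow_stationary (ftail (S k)) r mu _ Hmu HG
    (is_derive_ftail_succ k mu) Hmin) as Hstat.
  rewrite p_rk_k_exp_term. unfold alpha_rk, beta_rk. simpl Nat.sub.
  rewrite Hstat, !exp_term_succ.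
  pose proof (exp_term_pos mu k Hmu). pose proof (exp_pos (- mu)).
  rewrite !S_INR. pose proof (pos_INR r). pose proof (pos_INR k).
  field. repeat split; lra.
Qed.
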